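(* Let $(A,\succ,\prec)$ be an anti-pre-Novikov algebra and $s=\sum_i a_i\otimes b_i\in A\otimes A$ such that $s+\tau(s)$ is invariant. The following are equivalent: (a) $P(s)=0$; (b) $P_3(s)=0$; (c) $P_1(s)=P_2(s)=0$; (d) $P_4(s)=P_5(s)=0$; (e) $P(\tau(s))=0$, where (sums over $i,j$) $P(s)=\sum a_i\circ a_j\otimes b_i\otimes b_j+\sum a_j\otimes a_i\otimes(b_i\odot b_j)+\sum a_i\otimes(b_i\prec a_j)\otimes b_j$, $P_1(s)=\sum a_i\prec a_j\otimes b_i\otimes b_j-\sum a_i\otimes a_j\otimes(b_i\odot b_j)+\sum a_i\otimes(b_i\circ a_j)\otimes b_j$, $P_2(s)=\sum a_i\succ a_j\otimes b_i\otimes b_j+\sum a_i\otimes a_j\otimes(b_i\star b_j)-\sum a_i\otimes(b_i\succ a_j)\otimes b_j$, $P_3(s)=\sum a_i\otimes a_j\otimes(b_i\circ b_j)-\sum a_i\prec a_j\otimes b_j\otimes b_i-\sum a_i\otimes(b_i\odot a_j)\otimes b_j$, $P_4(s)=\sum a_i\circ a_j\otimes b_j\otimes b_i-\sum a_i\otimes a_j\otimes(b_i\prec b_j)-\sum a_j\otimes(a_i\odot b_j)\otimes b_i$, $P_5(s)=\sum a_i\otimes(b_i\star a_j)\otimes b_j-\sum a_i\succ a_j\otimes b_j\otimes b_i-\sum a_i\otimes a_j\otimes(b_i\succ b_j)$, and $P(\tau(s))=\sum b_i\circ b_j\otimes a_i\otimes a_j+\sum b_j\otimes b_i\otimes(a_i\odot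 a_j)+\sum b_i\otimes(a_i\prec b_j)\otimes a_j$.
   Context: $A$ is finite-dimensional over a field $k$. An anti-pre-Novikov algebra is $(A,\succ,\prec)$ such that with $x\circ y=x\succ y+x\prec y$: $(x\circ y-y\circ x)\succ z=y\succ(x\succ z)-x\succ(y\succ z)$; $x\prec(y\circ z)=(y\succ x)\prec z-(x\prec y)\prec z-y\succ(x\prec z)$; $(x\circ y)\succ z=-(x\succ z)\prec y$; $(x\prec y)\prec z=(x\prec z)\prec y$; $(x\circ y-y\circ x)\prec z=x\succ(y\circ z)-y\succ(x\circ z)$. Further $x\odot y=x\succ y+y\prec x$, $x\star y=x\circ y+y\circ x$; $L_\ast(x)y=x\ast y$, $R_\ast(x)y=y\ast x$; $L_{\star}=L_{\circ}+R_{\circ}$, $L_{\odot}=L_{\succ}+R_{\prec}$. $\tau$ is the flip. $r\in A\otimes A$ is invariant if $(I\otimes L_{\star}(x)-L_{\succ}(x)\otimes I)r=0$ and $(L_{\circ}(x)\otimes I-I\otimes L_{\odot}(x))r=0$ for all $x\in A$. The equation $P(s)=0$ is the anti-pre-Novikov Yang–Baxter equation. *)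

(* A finite-dimensional algebra over a field K is modelled as
   a vectType K; tensors in A(x)A and A(x)A(x)A are represented by their
   coordinate arrays with respect to the basis vbasis fullv of A. *)
From HB Require Import structures.
From mathcomp Require Import all_boot all_algebra.
Set Implicit Arguments. Unset Strict Implicit. Unset Printing Implicit Defensive.
Import GRing.Theory.
Local Open Scope ring_scope.

Section AntiPreNovikov.
Variables (K : fieldType) (A : vectType K).

Definition dimA : nat := \dim (fullv : {vspace A}).

Definition crd (x : A) (i : 'I_dimA) : K := coord (vbasis (fullv : {vspace A})) i x.

Definition tens2 (x y : A) : {ffun 'I_dimA * 'I_dimA -> K} :=
  [ffun p => crd x p.1 * crd y p.2].

Definition tens3 (x y z : A) : {ffun 'I_dimA * 'I_dimA * 'I_dimA -> K} :=
  [ffun p => crd x p.1.1 * crd y p.1.2 * crd z p.2].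

Definition is_bilinear (f : A -> A -> A) : Prop :=
  (forall x (c : K) u v, f x (c *: u + v) = c *: f x u + f x v) /\
  (forall y (c : K) u v, f (c *: u + v) y = c *: f u y + f v y).

Variables (sc pr : A -> A -> A). (* sc = succ, pr = prec *)

Definition circ x y := sc x y + pr x y.
Definition odot x y := sc x y + pr y x.
Definition star x y := circ x y + circ y x.

Definition anti_pre_Novikov : Prop :=
  is_bilinear sc /\ is_bilinear pr /\
  forall x y z : A,
  [/\ sc (circ x y - circ y x) z = sc y (sc x z) - sc x (sc y z),
      pr x (circ y z) = pr (sc y x) z - pr (pr x y) z - sc y (pr x z),
      sc (circ x y) z = - pr (sc x z) y,
      pr (pr x y) z = pr (pr x z) y &
      pr (circ x y - circ y x) z = sc x (circ y z) - sc y (circ x z)].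

(* r = \sum_(p <- r) p.1 (x) p.2 is invariant *)
Definition inv_tensor (r : seq (A * A)) : Prop :=
  forall x : A,
    \sum_(p <- r) (tens2 p.1 (star x p.2) - tens2 (sc x p.1) p.2) = 0 /\
    \sum_(p <- r) (tens2 (circ x p.1) p.2 - tens2 p.1 (odot x p.2)) = 0.

(* s = \sum_(i < m) a i (x) b i ;  s + tau(s) as a list of pure tensors *)
Definition s_plus_tau (m : nat) (a b : 'I_m -> A) : seq (A * A) :=
  [seq (a i, b i) | i <- enum 'I_m] ++ [seq (b i, a i) | i <- enum 'I_m].

Variables (m : nat) (a b : 'I_m -> A).

Definition P :=
  \sum_(i < m) \sum_(j < m)
    (tens3 (circ (a i) (a j)) (b i) (b j) + tens3 (a j) (a i) (odot (b i) (b j))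
     + tens3 (a i) (pr (b i) (a j)) (b j)).

Definition P1 :=
  \sum_(i < m) \sum_(j < m)
    (tens3 (pr (a i) (a j)) (b i) (b j) - tens3 (a i) (a j) (odot (b i) (b j))
     + tens3 (a i) (circ (b i) (a j)) (b j)).

Definition P2 :=
  \sum_(i < m) \sum_(j < m)
    (tens3 (sc (a i) (a j)) (b i) (b j) + tens3 (a i) (a j) (star (b i) (b j))
     - tens3 (a i) (sc (b i) (a j)) (b j)).

Definition P3 :=
  \sum_(i < m) \sum_(j < m)
    (tens3 (a i) (a j) (circ (b i) (b j)) - tens3 (pr (a i) (a j)) (b j) (b i)
     - tens3 (a i) (odot (b i) (a j)) (b j)).

Definition P4 :=
  \sum_(i < m) \sum_(j < m)
    (tens3 (circ (a i) (a j)) (b j) (b i) - tens3 (a i) (a j) (pr (b i) (b j))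
     - tens3 (a j) (odot (a i) (b j)) (b i)).

Definition P5 :=
  \sum_(i < m) \sum_(j < m)
    (tens3 (a i) (star (b i) (a j)) (b j) - tens3 (sc (a i) (a j)) (b j) (b i)
     - tens3 (a i) (a j) (sc (b i) (b j))).

End AntiPreNovikov.

(** Write D(x) and D'(x) for the two tensors whose vanishing for all x expresses
    the invariance of r = s + tau(s).  Expanded in coordinates, each of
    P, P1, ..., P5, P(tau(s)), evaluated at a coordinate triple, is a signed sum
    of others evaluated at permuted triples, plus contractions sum_i y_i (x) D(x_i)
    and sum_i y_i (x) D'(x_i) with (x, y) = (a, b) or (b, a), plus a double sum
    over (i, j) that is antisymmetric in (i, j) and therefore vanishes.  Under
    invariance the contractions vanish, which gives the cycle of implications
    (a) => (b) => (c) => (d) => (e) => (a). *)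
From HB Require Import structures.
From mathcomp Require Import all_boot all_algebra ring.
Set Implicit Arguments. Unset Strict Implicit. Unset Printing Implicit Defensive.
Import GRing.Theory.
Local Open Scope ring_scope.

Definition dsum (V : zmodType) n (F : 'I_n -> 'I_n -> V) : V :=
  \sum_(i < n) \sum_(j < n) F i j.

Lemma dsumD (V : zmodType) n (F G : 'I_n -> 'I_n -> V) :
  dsum F + dsum G = dsum (fun i j => F i j + G i j).
Proof. by rewrite /dsum -big_split; apply: eq_bigr => i _; rewrite -big_split. Qed.

Lemma dsumN (V : zmodType) n (F : 'I_n -> 'I_n -> V) :
  - dsum F = dsum (fun i j => - F i j).
Proof. by rewrite /dsum -sumrN; apply: eq_bigr => i _; rewrite -sumrN. Qed.

Lemma dsum_antisym (V : zmodType) n (F : 'I_n -> 'I_n -> V) :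
  (forall i j, F i j + F j i = 0) -> (forall i, F i i = 0) -> dsum F = 0.
Proof.
move=> Fanti Fdiag.
pose U (i j : 'I_n) := if (i < j)%N then F i j else 0.
have -> : dsum F = dsum (fun i j => U i j - U j i).
  apply: eq_bigr => i _; apply: eq_bigr => j _; rewrite /U.
  case: ltngtP => [_|_|/val_inj <-]; rewrite ?subr0 ?subrr ?Fdiag //.
  by apply/eqP; rewrite sub0r -addr_eq0 Fanti.
rewrite /dsum; under eq_bigr do rewrite sumrB.
by rewrite sumrB [X in _ - X]exchange_big subrr.
Qed.

Lemma sum2_ffunE (aT : finType) (V : zmodType) n (F : 'I_n -> 'I_n -> {ffun aT -> V}) w :
  (\sum_(i < n) \sum_(j < n) F i j) w = dsum (fun i j => F i j w).
Proof. by rewrite sum_ffunE; apply: eq_bigr => i _; rewrite sum_ffunE. Qed.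

Section Expansions.
Variables (K : fieldType) (A : vectType K) (sc pr : A -> A -> A).
Variables (m : nat) (a b : 'I_m -> A).

Lemma crdD (x y : A) k : crd (x + y) k = crd x k + crd y k.
Proof. by rewrite /crd linearD. Qed.

Lemma big_s_plus_tau (V : zmodType) (F : A * A -> V) :
  \sum_(p <- s_plus_tau a b) F p = \sum_(j < m) (F (a j, b j) + F (b j, a j)).
Proof. by rewrite big_cat !big_map big_split /= [index_enum _]unlock. Qed.

Definition star_term (x : A) (p : A * A) := tens2 p.1 (star sc pr x p.2) - tens2 (sc x p.1) p.2.
Definition odot_term (x : A) (p : A * A) := tens2 (circ sc pr x p.1) p.2 - tens2 p.1 (odot sc pr x p.2).

(* The (k, u, v)-coordinate of sum_i y_i (x) D_T(x_i), where
   D_T(x) = sum_(p in s + tau(s)) T x p is one of the two invariance defects. *)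
Definition contr (T : A -> A * A -> {ffun 'I_(dimA A) * 'I_(dimA A) -> K})
    (y x : 'I_m -> A) k u v :=
  \sum_(i < m) crd (y i) k * (\sum_(p <- s_plus_tau a b) T (x i) p) (u, v).

Lemma contrE T y x k u v :
  contr T y x k u v =
  dsum (fun i j => crd (y i) k * (T (x i) (a j, b j) + T (x i) (b j, a j)) (u, v)).
Proof.
apply: eq_bigr => i _.
by rewrite big_s_plus_tau sum_ffunE mulr_sumr.
Qed.

Lemma contr_star_eq0 y x k u v :
  inv_tensor sc pr (s_plus_tau a b) -> contr star_term y x k u v = 0.
Proof.
move=> inv_r; apply: big1 => i _.
by have [-> _] := inv_r (x i); rewrite ffunE mulr0.
Qed.

Lemma contr_odot_eq0 y x k u v :
  inv_tensor sc pr (s_plus_tau a b) -> contr odot_term y x k u v = 0.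
Proof.
move=> inv_r; apply: big1 => i _.
by have [_ ->] := inv_r (x i); rewrite ffunE mulr0.
Qed.

Local Ltac antisymmetric_remainder :=
  apply/eqP; rewrite -subr_eq0; apply/eqP;
  rewrite !sum2_ffunE !contrE ?opprD ?opprK ?dsumN ?dsumD;
  apply: dsum_antisym => [i j|i];
  rewrite !ffunE /= /circ /odot /star !crdD; ring.

Lemma P3_expand w0 w1 w2 :
  P3 sc pr a b (w0, w1, w2) =
  P sc pr a b (w0, w1, w2) + P sc pr a b (w1, w0, w2) - P sc pr a b (w2, w1, w0)
  - contr star_term b a w2 w0 w1 - contr star_term b a w2 w1 w0
  + contr star_term b a w0 w1 w2 - contr odot_term b a w0 w2 w1
  - contr odot_term a b w1 w2 w0.
Proof. antisymmetric_remainder. Qed.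

Lemma P1_expand w0 w1 w2 :
  P1 sc pr a b (w0, w1, w2) =
  - P3 sc pr a b (w0, w1, w2) - P3 sc pr a b (w1, w0, w2) + P3 sc pr a b (w1, w2, w0)
  - contr odot_term b a w2 w0 w1 - contr odot_term b a w2 w1 w0
  - contr odot_term a b w1 w0 w2.
Proof. antisymmetric_remainder. Qed.

Lemma P2_expand w0 w1 w2 :
  P2 sc pr a b (w0, w1, w2) =
  P3 sc pr a b (w0, w1, w2) + P3 sc pr a b (w1, w0, w2)
  + contr star_term b a w2 w1 w0 + contr odot_term b a w2 w1 w0.
Proof. antisymmetric_remainder. Qed.

Lemma P4_expand w0 w1 w2 :
  P4 sc pr a b (w0, w1, w2) =
  P1 sc pr a b (w1, w0, w2) + P2 sc pr a b (w1, w2, w0)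
  + contr odot_term b a w2 w0 w1 - contr star_term a b w1 w2 w0.
Proof. antisymmetric_remainder. Qed.

Lemma P5_expand w0 w1 w2 :
  P5 sc pr a b (w0, w1, w2) =
  - P1 sc pr a b (w1, w0, w2) - P1 sc pr a b (w1, w2, w0)
  - P2 sc pr a b (w1, w0, w2) - P2 sc pr a b (w1, w2, w0)
  + contr star_term b a w2 w0 w1 + contr star_term a b w1 w2 w0
  + contr odot_term a b w1 w2 w0.
Proof. antisymmetric_remainder. Qed.

Lemma P_tau_expand w0 w1 w2 :
  P sc pr b a (w0, w1, w2) =
  - P4 sc pr a b (w1, w2, w0) - P5 sc pr a b (w1, w2, w0)
  + contr star_term b a w0 w1 w2 + contr odot_term b a w0 w1 w2.
Proof. antisymmetric_remainder. Qed.

Lemma P_expand w0 w1 w2 :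
  P sc pr a b (w0, w1, w2) =
  P sc pr b a (w0, w1, w2)
  - contr odot_term b a w2 w0 w1 + contr star_term b a w2 w1 w0
  - contr star_term b a w0 w1 w2 - contr odot_term b a w0 w1 w2
  - contr odot_term a b w1 w0 w2.
Proof. antisymmetric_remainder. Qed.

End Expansions.

Lemma tensor3_eq0 (T : finType) (V : zmodType) (t : {ffun T * T * T -> V}) :
  (forall w0 w1 w2, t (w0, w1, w2) = 0) -> t = 0.
Proof. by move=> t0; apply/ffunP => -[[w0 w1] w2]; rewrite t0 ffunE. Qed.

Theorem mainTheorem11 (K : fieldType) (A : vectType K) (sc pr : A -> A -> A)
  (m : nat) (a b : 'I_m -> A) :
  anti_pre_Novikov sc pr ->
  inv_tensor sc pr (s_plus_tau a b) ->
  [<-> P sc pr a b = 0;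
       P3 sc pr a b = 0;
       P1 sc pr a b = 0 /\ P2 sc pr a b = 0;
       P4 sc pr a b = 0 /\ P5 sc pr a b = 0;
       P sc pr b a = 0].
Proof.
(* Only the invariance of s + tau(s) is needed, not the anti-pre-Novikov axioms. *)
move=> _ inv_r.
have Cs := contr_star_eq0 _ _ _ _ _ inv_r; have Co := contr_odot_eq0 _ _ _ _ _ inv_r.
tfae.
- move=> P0; apply: tensor3_eq0 => w0 w1 w2.
  by rewrite P3_expand P0 !ffunE !Cs !Co !(subr0, addr0).
- move=> P3_0; split; apply: tensor3_eq0 => w0 w1 w2.
  + by rewrite P1_expand P3_0 !ffunE !Co !(subr0, addr0, oppr0).
  + by rewrite P2_expand P3_0 !ffunE !Cs !Co !addr0.
- case=> P1_0 P2_0; split; apply: tensor3_eq0 => w0 w1 w2.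
  + by rewrite P4_expand P1_0 P2_0 !ffunE !Cs !Co !(subr0, addr0).
  + by rewrite P5_expand P1_0 P2_0 !ffunE !Cs !Co !(subr0, addr0, oppr0).
- case=> P4_0 P5_0; apply: tensor3_eq0 => w0 w1 w2.
  by rewrite P_tau_expand P4_0 P5_0 !ffunE !Cs !Co !(subr0, addr0, oppr0).
- move=> Ptau0; apply: tensor3_eq0 => w0 w1 w2.
  by rewrite P_expand Ptau0 !ffunE !Cs !Co !(subr0, addr0).
Qed.
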